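(* Let $G=(V,E)$ be a graph on $V=\{1,\ldots,n\}$ and $b(\mathbf x)=\sum_{ij\in E}a_{ij}x_ix_j$ with real coefficients. Let $c$ be a real number such that $\sum_{ij\in\gamma(X)}|a_{ij}|\leqslant c\left(\mu^+(X)-\mu^-(X)\right)$ for all $X\subseteq V$. Then $\operatorname{mcgap}[b](\mathbf x)\leqslant c\,\operatorname{chgap}[b](\mathbf x)$ for all $\mathbf x\in[0,1]^n$.
   Context: $B=\{(\mathbf x,z)\in[0,1]^n\times\mathbb R:z=b(\mathbf x)\}$. The McCormick polytopes are $P=\{(\mathbf x,\mathbf y)\in[0,1]^n\times[0,1]^{|E|}: y_{ij}\le x_i,\ y_{ij}\le x_j,\ y_{ij}\ge x_i+x_j-1\ \forall ij\in E\}$ and $Q=\{(\mathbf x,z)\in[0,1]^n\times\mathbb R:\exists\mathbf y\in[0,1]^{|E|}\text{ with }(\mathbf x,\mathbf y)\in P,\ z=\sum_{ij\in E}a_{ij}y_{ij}\}$. $\operatorname{cav}[b](\mathbf x)=\max\{z:(\mathbf x,z)\in\operatorname{conv}(B)\}$, $\operatorname{vex}[b](\mathbf x)=\min\{z:(\mathbf x,z)\in\operatorname{conv}(B)\}$, $\operatorname{mcu}[b](\mathbf x)=\max\{z:(\mathbf x,z)\in Q\}$, $\operatorname{mcl}[b](\mathbf x)=\min\{z:(\mathbf x,z)\in Q\}$, $\operatorname{chgap}[b]=\operatorname{cav}[b]-\operatorname{vex}[b]$, $\operatorname{mcgap}[b]=\operatorname{mcu}[b]-\operatorname{mcl}[b]$.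 For $X\subseteq V$, $\gamma(X)$ is the set of edges with both endpoints in $X$; for disjoint $U_1,U_2$, $\delta(U_1,U_2)$ is the set of edges with one endpoint in each; $\mu^+(X)=\max\{\sum_{ij\in\delta(U_1,U_2)}a_{ij}:U_1\cup U_2=X,\ U_1\cap U_2=\emptyset\}$ and $\mu^-(X)$ is the corresponding minimum. *)

From HB Require Import structures.
From mathcomp Require Import all_boot all_order all_algebra.
Set Implicit Arguments. Unset Strict Implicit. Unset Printing Implicit Defensive.
Import Order.TTheory GRing.Theory Num.Theory.
Local Open Scope ring_scope.

(* Vertices V = 'I_n ; a graph is an edge set E of pairs (i,j) with i < j
   (hypothesis in the theorem); a : edge -> coefficient a_ij. Points of R^n
   are functions 'I_n -> R. *)

Section Defs.
Variables (R : realFieldType) (n : nat).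
Implicit Types (E : {set 'I_n * 'I_n}) (a : 'I_n * 'I_n -> R) (x : 'I_n -> R).

Definition in_cube x : Prop := forall i, 0 <= x i <= 1.

Definition bilin E a x : R := \sum_(e in E) a e * x e.1 * x e.2.

Definition in_P E x (y : 'I_n * 'I_n -> R) : Prop :=
  in_cube x /\
  forall e, e \in E ->
    [/\ 0 <= y e <= 1, y e <= x e.1, y e <= x e.2 & x e.1 + x e.2 - 1 <= y e].

Definition in_Q E a x (z : R) : Prop :=
  in_cube x /\ exists y, in_P E x y /\ z = \sum_(e in E) a e * y e.

Definition in_B E a x (z : R) : Prop := in_cube x /\ z = bilin E a x.

Definition in_convB E a x (z : R) : Prop :=
  exists (k : nat) (lam : 'I_k -> R) (p : 'I_k -> 'I_n -> R) (w : 'I_k -> R),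
    [/\ forall t, 0 <= lam t,
        \sum_(t < k) lam t = 1,
        forall t, in_B E a (p t) (w t),
        forall i, x i = \sum_(t < k) lam t * p t i
      & z = \sum_(t < k) lam t * w t].

Definition is_max (S : R -> Prop) (z : R) : Prop := S z /\ forall w, S w -> w <= z.
Definition is_min (S : R -> Prop) (z : R) : Prop := S z /\ forall w, S w -> z <= w.

Definition gammaE E (X : {set 'I_n}) : {set 'I_n * 'I_n} :=
  [set e in E | (e.1 \in X) && (e.2 \in X)].
Definition deltaE E (U1 U2 : {set 'I_n}) : {set 'I_n * 'I_n} :=
  [set e in E | ((e.1 \in U1) && (e.2 \in U2)) || ((e.1 \in U2) && (e.2 \in U1))].

Definition cut_weight E a (U1 U2 : {set 'I_n}) : R := \sum_(e in deltaE E U1 U2) a e.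

(* mu^+(X), mu^-(X): max / min over ordered partitions (U1, X \ U1) of X.
   The partition U1 = X, U2 = empty has weight 0, so using 0 as the neutral
   element of the iterated max / min is harmless. *)
Definition mu_plus E a (X : {set 'I_n}) : R :=
  \big[Num.max/0]_(U1 in powerset X) cut_weight E a U1 (X :\: U1).
Definition mu_minus E a (X : {set 'I_n}) : R :=
  \big[Num.min/0]_(U1 in powerset X) cut_weight E a U1 (X :\: U1).

End Defs.

From HB Require Import structures.
From mathcomp Require Import all_boot all_order all_algebra.
From mathcomp Require Import ring lra.
Import Order.TTheory GRing.Theory Num.Theory.
Local Open Scope ring_scope.
Set Implicit Arguments. Unset Strict Implicit.

(* Writing d_k = min (x_k, 1 - x_k), the McCormick relaxation moves z by at
   most Σ_{ij ∈ E} |a_ij| min (d_i, d_j) at x.  Let F be the set of fractional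
   coordinates of x and d the least d_k on F.  Then x = 2d m + (1 - 2d) x',
   where m sets the coordinates in F to 1/2 and x' has fewer fractional
   coordinates, and the bound splits as d Σ_{γ(F)} |a| + (1 - 2d) (bound at x').
   For U ⊆ F, m is the midpoint of the two 0/1 roundings of F given by the
   indicators of U and of F \ U.  The sum of their b-values plus cut(U, F \ U)
   does not depend on U, so conv(B) has values over m spreading by
   (μ^+(F) - μ^-(F)) / 2, which controls Σ_{γ(F)} |a| by hypothesis.  Induction
   on |F| gives the case c >= 0; for c < 0 the hypothesis forces a = 0 on E. *)

Lemma split_lshift m k (i : 'I_m) : split (lshift k i) = inl i.
Proof. exact: (unsplitK (inl _ i)). Qed.

Lemma split_rshift m k (j : 'I_k) : split (rshift m j) = inr j.
Proof. exact: (unsplitK (inr _ j)). Qed.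

Lemma bigop_attained (T : Type) (I : finType) (op : T -> T -> T) (idx : T)
    (P : pred I) (F : I -> T) (i0 : I) :
  (forall u v, op u v = u \/ op u v = v) -> P i0 -> F i0 = idx ->
  exists2 i, P i & \big[op/idx]_(i | P i) F i = F i.
Proof.
move=> op_sel Pi0 Fi0; apply: (big_ind (fun v => exists2 i, P i & v = F i)).
- by exists i0.
- by move=> u v [i Pi ->] [j Pj ->]; case: (op_sel (F i) (F j)) => ->;
    [exists i | exists j].
- by move=> i Pi; exists i.
Qed.

Lemma mccormick_spread (R : realDomainType) (u v y y' : R) :
  0 <= y -> y <= u -> y <= v -> u + v - 1 <= y ->
  0 <= y' -> y' <= u -> y' <= v -> u + v - 1 <= y' ->
  `|y - y'| <= Num.min (Num.min u (1 - u)) (Num.min v (1 - v)).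
Proof.
move=> *; rewrite !le_min.
by case: (ler0P (y - y')) => _; apply/andP; split; apply/andP; split; lra.
Qed.

Section McCormickGap.
Variables (R : realFieldType) (n : nat) (E : {set 'I_n * 'I_n}) (a : 'I_n * 'I_n -> R).
Implicit Types (x : 'I_n -> R) (X U : {set 'I_n}).

Lemma in_convB_point x : in_cube x -> in_convB E a x (bilin E a x).
Proof.
move=> x_cube; exists 1%N, (fun _ => 1), (fun _ => x), (fun _ => bilin E a x).
by split=> [_|||i|]; rewrite ?big_ord1 ?mul1r ?ler01.
Qed.

Lemma in_convB_mix t x1 z1 x2 z2 x z :
  0 <= t <= 1 -> in_convB E a x1 z1 -> in_convB E a x2 z2 ->
  (forall i, x i = t * x1 i + (1 - t) * x2 i) -> z = t * z1 + (1 - t) * z2 ->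
  in_convB E a x z.
Proof.
move=> /andP[t_ge0 t_le1] [k1 [l1 [p1 [w1 [l1_ge0 l1_sum p1B p1x w1z]]]]]
  [k2 [l2 [p2 [w2 [l2_ge0 l2_sum p2B p2x w2z]]]]] x_mix ->.
pose glue T (f1 : 'I_k1 -> T) (f2 : 'I_k2 -> T) s :=
  match split s with inl i => f1 i | inr j => f2 j end.
have sum_glue (f1 : 'I_k1 -> R) f2 :
    \sum_(s < k1 + k2) glue R (fun i => t * f1 i) (fun j => (1 - t) * f2 j) s
    = t * \sum_(i < k1) f1 i + (1 - t) * \sum_(j < k2) f2 j.
  by rewrite big_split_ord !mulr_sumr /glue;
    congr (_ + _); apply: eq_bigr => i _; rewrite ?split_lshift ?split_rshift.
exists (k1 + k2)%N, (glue R (fun i => t * l1 i) (fun j => (1 - t) * l2 j)),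
  (glue _ p1 p2), (glue R w1 w2); split.
- by move=> s; rewrite /glue; case: (split s) => ? /=; apply: mulr_ge0 => //; lra.
- by rewrite sum_glue l1_sum l2_sum; ring.
- by move=> s; rewrite /glue; case: (split s).
- move=> i; rewrite x_mix p1x p2x -sum_glue; apply: eq_bigr => s _.
  by rewrite /glue; case: (split s) => ?; rewrite mulrA.
- rewrite w1z w2z -sum_glue; apply: eq_bigr => s _.
  by rewrite /glue; case: (split s) => ?; rewrite mulrA.
Qed.

Definition dist01 x k : R := Num.min (x k) (1 - x k).
Definition edge_dist x (e : 'I_n * 'I_n) : R := Num.min (dist01 x e.1) (dist01 x e.2).
Definition fractional x : {set 'I_n} := [set k | 0 < x k < 1].
Definition mc_gap_bound x : R := \sum_(e in E) `|a e| * edge_dist x e.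

Lemma dist01_gt0 x k : (0 < dist01 x k) = (k \in fractional x).
Proof. by rewrite inE lt_min subr_gt0. Qed.

Lemma dist01_ge0 x k : in_cube x -> 0 <= dist01 x k.
Proof. by move=> /(_ k) /andP[? ?]; rewrite le_min subr_ge0; apply/andP. Qed.

Lemma dist01_eq0 x k : in_cube x -> k \notin fractional x -> dist01 x k = 0.
Proof.
move=> x_cube; rewrite -dist01_gt0 -leNgt => ?.
by apply/le_anti/andP; split; last exact: dist01_ge0.
Qed.

Lemma edge_dist_eq0 x e : in_cube x ->
  (e.1 \notin fractional x) || (e.2 \notin fractional x) -> edge_dist x e = 0.
Proof.
move=> x_cube /orP[] /(dist01_eq0 x_cube) d0; rewrite /edge_dist d0.
- by rewrite min_l // dist01_ge0.
- by rewrite min_r // dist01_ge0.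
Qed.

Lemma mc_gap_bound_eq0 x : in_cube x -> fractional x = set0 -> mc_gap_bound x = 0.
Proof.
move=> x_cube x_int; rewrite /mc_gap_bound big1 // => e _.
by rewrite edge_dist_eq0 ?mulr0 // x_int inE.
Qed.

Lemma mcQ_gap_le x mcu mcl :
  is_max (in_Q E a x) mcu -> is_min (in_Q E a x) mcl -> mcu - mcl <= mc_gap_bound x.
Proof.
case=> [[_ [y [[_ y_P] ->]]] _] [[_ [y' [[_ y'_P] ->]]] _].
rewrite -sumrB; apply: ler_sum => e eE; rewrite -mulrBr.
apply: le_trans (ler_norm _) _; rewrite normrM; apply: ler_wpM2l => //.
have [/andP[? ?] ? ? ?] := y_P e eE; have [/andP[? ?] ? ? ?] := y'_P e eE.
exact: mccormick_spread.
Qed.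

Lemma cut_weight_setDv X : cut_weight E a X (X :\: X) = 0.
Proof. by rewrite /cut_weight big1 // => e; rewrite /deltaE setDv !inE !andbF. Qed.

Lemma mu_minus_le_plus X : mu_minus E a X <= mu_plus E a X.
Proof.
have XX : X \in powerset X by rewrite powersetE.
exact: le_trans (bigmin_le_cond _ _ XX) (le_bigmax_cond _ _ XX).
Qed.

Lemma mu_plus_attained X :
  exists2 U : {set 'I_n}, U \subset X & mu_plus E a X = cut_weight E a U (X :\: U).
Proof.
rewrite /mu_plus.
have max_sel (u v : R) : Num.max u v = u \/ Num.max u v = v.
  by rewrite /Order.max; case: ifP; [right | left].
have XX : X \in powerset X by rewrite powersetE.
have [U UX ->] := bigop_attained (P := fun U => U \in powerset X)
  (F := fun U => cut_weight E a U (X :\: U)) max_sel XX (cut_weight_setDv X).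
by rewrite powersetE in UX; exists U.
Qed.

Lemma mu_minus_attained X :
  exists2 U : {set 'I_n}, U \subset X & mu_minus E a X = cut_weight E a U (X :\: U).
Proof.
rewrite /mu_minus.
have min_sel (u v : R) : Num.min u v = u \/ Num.min u v = v.
  by rewrite /Order.min; case: ifP; [left | right].
have XX : X \in powerset X by rewrite powersetE.
have [U UX ->] := bigop_attained (P := fun U => U \in powerset X)
  (F := fun U => cut_weight E a U (X :\: U)) min_sel XX (cut_weight_setDv X).
by rewrite powersetE in UX; exists U.
Qed.

Definition round_on X U x k : R := if k \in X then (k \in U)%:R else x k.
Definition half_on X x k : R := if k \in X then 2^-1 else x k.

Lemma round_on_cube X U x : in_cube x -> in_cube (round_on X U x).
Proof.
move=> x_cube k; rewrite /round_on; case: ifP => _; last exact: x_cube.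
by case: (k \in U); rewrite ?lexx ?ler01.
Qed.

Lemma bilin_round_add_cut X U x : U \subset X ->
  bilin E a (round_on X U x) + bilin E a (round_on X (X :\: U) x)
    + cut_weight E a U (X :\: U)
  = bilin E a (round_on X X x) + bilin E a (round_on X set0 x).
Proof.
move/subsetP=> UX; rewrite /cut_weight /deltaE big_set /= big_mkcondr /bilin.
rewrite -!big_split; apply: eq_bigr => e _; rewrite /round_on !inE.
move: (UX e.1) (UX e.2).
by case: (e.1 \in U); case: (e.2 \in U); case: (e.1 \in X); case: (e.2 \in X)
  => /= h1 h2; first [ring | by have := h1 isT | by have := h2 isT].
Qed.

Lemma in_convB_half_on X U x : in_cube x ->
  in_convB E a (half_on X x)
    ((bilin E a (round_on X U x) + bilin E a (round_on X (X :\: U) x)) / 2).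
Proof.
move=> x_cube; apply: (in_convB_mix (t := 2^-1))
  (in_convB_point (round_on_cube X U x_cube))
  (in_convB_point (round_on_cube X (X :\: U) x_cube)) _ _.
- by apply/andP; split; lra.
- move=> k; rewrite /half_on /round_on !inE.
  by case: (k \in X); case: (k \in U) => /=; lra.
- lra.
Qed.

Lemma half_on_convB_spread X x : in_cube x ->
  exists z1 z2, [/\ in_convB E a (half_on X x) z1, in_convB E a (half_on X x) z2
                  & mu_plus E a X - mu_minus E a X = 2 * (z1 - z2)].
Proof.
move=> x_cube.
have [Up UpX mu_plusE] := mu_plus_attained X.
have [Um UmX mu_minusE] := mu_minus_attained X.
do 2![eexists]; split;
  [exact: (in_convB_half_on X Um x_cube) | exact: (in_convB_half_on X Up x_cube) |].
have := bilin_round_add_cut x UpX; have := bilin_round_add_cut x UmX.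
rewrite mu_plusE mu_minusE; lra.
Qed.

(* For [2 d = 1] the division by zero sends the fractional coordinates to [0];
   they then all equal [1/2] and carry weight [1 - 2 d = 0] in [shrink_decomp]. *)
Definition shrink x d k : R :=
  if k \in fractional x then (x k - d) / (1 - 2 * d) else x k.

Lemma fractional_shrink_sub x d : fractional (shrink x d) \subset fractional x.
Proof.
apply/subsetP => k; rewrite [in X in X -> _]inE /shrink.
by case: ifP => //; rewrite inE => ->.
Qed.

Section Shrink.
Variables (x : 'I_n -> R) (d : R).
Hypotheses (x_cube : in_cube x) (d_le_half : 2 * d <= 1)
  (d_le_dist : forall k, k \in fractional x -> d <= dist01 x k).

Let t_ge0 : 0 <= 1 - 2 * d. Proof. by rewrite subr_ge0. Qed.

Let coord_bounds k : k \in fractional x -> d <= x k /\ d <= 1 - x k.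
Proof. by move/d_le_dist; rewrite le_min => /andP. Qed.

Let mul_t_div y : 1 - 2 * d != 0 -> (1 - 2 * d) * (y / (1 - 2 * d)) = y.
Proof. by move=> t_neq0; rewrite mulrC divfK. Qed.

Lemma shrink_cube : in_cube (shrink x d).
Proof.
move=> k; rewrite /shrink; case: ifP => kF; last exact: x_cube.
have [? ?] := coord_bounds kF.
have [->|t_neq0] := eqVneq (1 - 2 * d) 0; first by rewrite invr0 mulr0 lexx ler01.
have t_gt0 : 0 < 1 - 2 * d by rewrite lt_neqAle eq_sym t_neq0.
by rewrite divr_ge0 ?subr_ge0 //= ler_pdivrMr // mul1r; lra.
Qed.

Lemma dist01_shrink k : k \in fractional x ->
  (1 - 2 * d) * dist01 (shrink x d) k = dist01 x k - d.
Proof.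
move=> kF; have [? ?] := coord_bounds kF; rewrite /dist01 /shrink kF.
have [t0|t_neq0] := eqVneq (1 - 2 * d) 0.
  have xk_d : x k = d by lra.
  have d_1d : 1 - d = d by lra.
  by rewrite t0 mul0r xk_d d_1d minxx subrr.
rewrite minr_pMr // mulrBr mulr1 mul_t_div // addr_minl.
by congr Num.min; ring.
Qed.

Lemma edge_dist_shrink e :
  edge_dist x e = d * ((e.1 \in fractional x) && (e.2 \in fractional x))%:R
                  + (1 - 2 * d) * edge_dist (shrink x d) e.
Proof.
have [/andP[F1 F2] | eF] := boolP (_ && _).
  by rewrite /edge_dist minr_pMr // !dist01_shrink // -addr_minl /=; ring.
have eF' : ~~ ((e.1 \in fractional (shrink x d)) && (e.2 \in fractional (shrink x d))).
  by apply: contra eF => /andP[? ?]; apply/andP; split;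
    apply: (subsetP (fractional_shrink_sub x d)).
by rewrite !edge_dist_eq0 -?negb_and // ?mulr0 ?addr0 //; exact: shrink_cube.
Qed.

Lemma mc_gap_bound_shrink :
  mc_gap_bound x = d * \sum_(e in gammaE E (fractional x)) `|a e|
                   + (1 - 2 * d) * mc_gap_bound (shrink x d).
Proof.
rewrite /mc_gap_bound /gammaE big_set /= big_mkcondr !mulr_sumr -big_split.
by apply: eq_bigr => e _; rewrite edge_dist_shrink; case: (_ && _) => /=; ring.
Qed.

Lemma shrink_decomp k :
  x k = 2 * d * half_on (fractional x) x k + (1 - 2 * d) * shrink x d k.
Proof.
rewrite /half_on /shrink; case: ifP => kF; last by ring.
have [? ?] := coord_bounds kF.
have [t0|t_neq0] := eqVneq (1 - 2 * d) 0; last by rewrite mul_t_div //; field.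
by rewrite t0 mul0r addr0; lra.
Qed.

Lemma fractional_shrink_subD1 i0 : i0 \in fractional x -> dist01 x i0 = d ->
  fractional (shrink x d) \subset fractional x :\ i0.
Proof.
move=> i0F i0_d; apply/subsetP => k kF'.
rewrite in_setD1 (subsetP (fractional_shrink_sub x d) _ kF') andbT.
apply/eqP => k_i0; move: kF'; rewrite {}k_i0.
have [t0|t_neq0] := eqVneq (1 - 2 * d) 0.
  by rewrite inE /shrink i0F t0 invr0 mulr0 ltxx.
rewrite -dist01_gt0 => dist_gt0.
have /eqP := dist01_shrink i0F; rewrite i0_d subrr mulf_eq0 (negbTE t_neq0) /=.
by move/eqP => dist_eq0; rewrite dist_eq0 ltxx in dist_gt0.
Qed.

End Shrink.

Lemma in_convB_coef0 x z : (forall e, e \in E -> a e = 0) -> in_convB E a x z -> z = 0.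
Proof.
move=> a0 [k [l [p [w [_ _ pB _ ->]]]]]; rewrite big1 // => s _.
have [_ ->] := pB s; rewrite /bilin big1 ?mulr0 // => e eE.
by rewrite a0 // !mul0r.
Qed.

Lemma mc_gap_bound_coef0 x : (forall e, e \in E -> a e = 0) -> mc_gap_bound x = 0.
Proof.
by move=> a0; rewrite /mc_gap_bound big1 // => e eE; rewrite a0 // normr0 mul0r.
Qed.

Section GapInduction.
Variable c : R.
Hypothesis gamma_le : forall X,
  \sum_(e in gammaE E X) `|a e| <= c * (mu_plus E a X - mu_minus E a X).

Definition convB_gap_le x :=
  exists z1 z2, [/\ in_convB E a x z1, in_convB E a x z2
                  & mc_gap_bound x <= c * (z1 - z2)].

Lemma convB_gap_le_shrink x d : in_cube x -> 0 <= d -> 2 * d <= 1 ->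
  (forall k, k \in fractional x -> d <= dist01 x k) ->
  convB_gap_le (shrink x d) -> convB_gap_le x.
Proof.
move=> x_cube d_ge0 d_le_half d_le_dist [z1' [z2' [z1'B z2'B gap_le']]].
have [z1 [z2 [z1B z2B spread]]] := half_on_convB_spread (fractional x) x_cube.
have mix_w : 0 <= 2 * d <= 1 by apply/andP; split; lra.
have x_mix := shrink_decomp d_le_dist.
exists (2 * d * z1 + (1 - 2 * d) * z1'), (2 * d * z2 + (1 - 2 * d) * z2'); split.
- exact: in_convB_mix mix_w z1B z1'B x_mix _.
- exact: in_convB_mix mix_w z2B z2'B x_mix _.
rewrite (mc_gap_bound_shrink x_cube d_le_half d_le_dist).
have gamma_le' := ler_wpM2l d_ge0 (gamma_le (fractional x)).
have t_ge0 : 0 <= 1 - 2 * d by lra.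
have gap_le'' := ler_wpM2l t_ge0 gap_le'.
rewrite spread in gamma_le'.
have -> : c * (2 * d * z1 + (1 - 2 * d) * z1' - (2 * d * z2 + (1 - 2 * d) * z2'))
  = d * (c * (2 * (z1 - z2))) + (1 - 2 * d) * (c * (z1' - z2')) by ring.
exact: lerD gamma_le' gap_le''.
Qed.

Lemma mc_gap_bound_le_convB x : in_cube x -> convB_gap_le x.
Proof.
have [m] := ubnP #|fractional x|; elim: m x => // m IH x card_lt x_cube.
have [x_int | [i iF]] := set_0Vmem (fractional x).
  exists (bilin E a x), (bilin E a x); split; try exact: in_convB_point.
  by rewrite mc_gap_bound_eq0 // subrr mulr0.
have [i0 i0F i0_min] := arg_minP (P := [in fractional x]) (dist01 x) iF.
have d_ge0 : 0 <= dist01 x i0 by rewrite ltW ?dist01_gt0.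
have d_le_half : 2 * dist01 x i0 <= 1.
  by have := lexx (dist01 x i0); rewrite {2}/dist01 le_min => /andP[? ?]; lra.
apply: (convB_gap_le_shrink x_cube d_ge0 d_le_half i0_min); apply: IH;
  last exact: shrink_cube.
have := subset_leq_card (fractional_shrink_subD1 d_le_half i0_min i0F erefl).
move/leq_ltn_trans; apply.
by move: card_lt; rewrite (cardsD1 i0) i0F add1n ltnS.
Qed.

Lemma coef_eq0_of_neg : c < 0 -> forall e, e \in E -> a e = 0.
Proof.
move=> c_lt0 e eE; apply/eqP; rewrite -normr_eq0; apply/eqP.
have sum_le0 : \sum_(e in gammaE E [set: 'I_n]) `|a e| <= 0.
  apply: le_trans (gamma_le _) _; apply: mulr_le0_ge0; first exact: ltW.
  by rewrite subr_ge0 mu_minus_le_plus.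
have sum_eq0 : \sum_(e in gammaE E [set: 'I_n]) `|a e| = 0.
  by apply/le_anti; rewrite sum_le0 sumr_ge0.
by apply: (psumr_eq0P _ sum_eq0) => //; rewrite /gammaE !inE eE.
Qed.

End GapInduction.

End McCormickGap.

Theorem corollary1 (R : realFieldType) (n : nat) (E : {set 'I_n * 'I_n})
    (a : 'I_n * 'I_n -> R) (c : R) :
  (forall e, e \in E -> (e.1 < e.2)%N) ->
  (forall X : {set 'I_n},
      \sum_(e in gammaE E X) `|a e| <= c * (mu_plus E a X - mu_minus E a X)) ->
  forall x : 'I_n -> R, in_cube x ->
  forall mcu mcl cav vex : R,
    is_max (in_Q E a x) mcu -> is_min (in_Q E a x) mcl ->
    is_max (in_convB E a x) cav -> is_min (in_convB E a x) vex ->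
    mcu - mcl <= c * (cav - vex).
Proof.
move=> _ gamma_le x x_cube mcu mcl cav vex mcu_max mcl_min cav_max vex_min.
apply: le_trans (mcQ_gap_le mcu_max mcl_min) _.
have [c_ge0 | c_lt0] := leP 0 c.
  have [z1 [z2 [z1B z2B gap_le]]] := mc_gap_bound_le_convB gamma_le x_cube.
  apply: le_trans gap_le (ler_wpM2l c_ge0 _).
  exact: lerB (cav_max.2 _ z1B) (vex_min.2 _ z2B).
have a0 := coef_eq0_of_neg gamma_le c_lt0.
by rewrite (in_convB_coef0 a0 cav_max.1) (in_convB_coef0 a0 vex_min.1) subrr mulr0
  mc_gap_bound_coef0.
Qed.
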